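(* Let $H=([t],E)$ be a hypergraph on vertex set $[t]=\{1,\dots,t\}$ in which every edge $e\in E$ is a subset of $[t]$ with $2\le |e|$, and let $d$ be the maximal edge size. Let $f:\{0,1\}^n\to\{-1,1\}$. Consider the test: choose $x_1,\dots,x_t\in\{0,1\}^n$ independently and uniformly at random, and accept iff for every $e\in E$, $$\prod_{i\in e} f(x_i)\cdot f\Big(\sum_{i\in e}x_i\Big)=f(0)^{|e|+1}.$$ Then the probability that this test accepts $f$ is at most $\frac{1}{2^{|E|}}+\|f\|_{U_d}$.
   Context: $\{0,1\}^n$ is identified with $\mathbb F_2^n$ (addition coordinatewise mod 2). For $f:\{0,1\}^n\to\mathbb R$ and integer $d\ge1$, the $d$-th Gowers uniformity norm is $$\|f\|_{U_d}=\Big[\mathbb E_{x,y_1,\dots,y_d}\prod_{S\subseteq[d]} f\Big(x+\sum_{i\in S}y_i\Big)\Big]^{1/2^d},$$ with $x,y_1,\dots,y_d$ independent and uniform in $\{0,1\}^n$. *)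

From HB Require Import structures.
From mathcomp Require Import all_boot all_order all_algebra.
From mathcomp Require Import reals exp.
Set Implicit Arguments. Unset Strict Implicit. Unset Printing Implicit Defensive.
Import Order.TTheory GRing.Theory Num.Theory.
Local Open Scope ring_scope.

(* {0,1}^n identified with F_2^n, represented as row vectors 'rV['F_2]_n. *)
Notation cube n := 'rV['F_2]_n.

Definition gowers_inner (R : realType) (n d : nat) (f : cube n -> R) : R :=
  ((#|{: cube n}| ^ d.+1)%:R)^-1 *
  \sum_(x : cube n) \sum_(y : {ffun 'I_d -> cube n})
     \prod_(S : {set 'I_d}) f (x + \sum_(i in S) y i).

Definition gowers_norm (R : realType) (n d : nat) (f : cube n -> R) : R :=
  powR (gowers_inner d f) ((2 ^+ d)^-1).

Definition hyper_test_accepts (R : realType) (n t : nat) (E : {set {set 'I_t}})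
  (f : cube n -> R) (x : {ffun 'I_t -> cube n}) : bool :=
  [forall e in E,
     (\prod_(i in e) f (x i)) * f (\sum_(i in e) x i) == f 0 ^+ (#|e|.+1)].

Definition hyper_test_prob (R : realType) (n t : nat) (E : {set {set 'I_t}})
  (f : cube n -> R) : R :=
  (#|[set x : {ffun 'I_t -> cube n} | hyper_test_accepts E f x]|%:R)
  / (#|{: {ffun 'I_t -> cube n}}|%:R).

(* Each clause of the test is the event [c_e x = 1] for the +-1 quantity
   [c_e x = f(0)^(|e|+1) * prod_(i in e) f(x_i) * f(sum_(i in e) x_i)], so the
   acceptance probability equals [2^-|E| * sum_(J subset E) E_x[prod_(e in J) c_e x]].
   The term [J = set0] is 1.  For [J <> set0] pick an edge [e0] of maximal size in [J]:
   every other edge of [J] misses some vertex of [e0], and every factor [f(x_i)],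
   [i in e0], can be charged to a vertex of [e0] other than [i].  Hence
   [prod_(e in J) c_e = +- f(sum_(i in e0) x_i) * prod_(a in e0) phi_a] where [|phi_a| <= 1]
   and [phi_a] does not depend on [x_a].  One Cauchy-Schwarz step per vertex of [e0]
   (the generalized von Neumann inequality) bounds the expectation by
   [||f||_(U_|e0|) <= ||f||_(U_d)]. *)

From mathcomp Require Import all_boot all_order all_algebra.
From mathcomp Require Import reals exp ring.
Set Implicit Arguments. Unset Strict Implicit. Unset Printing Implicit Defensive.
Import Order.TTheory GRing.Theory Num.Theory.
Local Open Scope ring_scope.

Section Average.
Variable R : realFieldType.
Implicit Types (T U : finType).

Definition avg T (F : T -> R) : R := (#|T|%:R)^-1 * \sum_(x : T) F x.

Lemma eq_avg T (F G : T -> R) : F =1 G -> avg F = avg G.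
Proof. by move=> eFG; rewrite /avg (eq_bigr _ (fun x _ => eFG x)). Qed.

Lemma ler_avg T (F G : T -> R) : (forall x, F x <= G x) -> avg F <= avg G.
Proof. by move=> leFG; rewrite /avg ler_wpM2l ?invr_ge0 ?ler0n ?ler_sum. Qed.

Lemma avg_ge0 T (F : T -> R) : (forall x, 0 <= F x) -> 0 <= avg F.
Proof. by move=> F0; rewrite /avg mulr_ge0 ?invr_ge0 ?ler0n ?sumr_ge0. Qed.

Lemma avg_cst T (x0 : T) (c : R) : avg (fun _ : T => c) = c.
Proof.
rewrite /avg sumr_const; change #|xpredT| with #|T|.
rewrite -[c *+ _]mulr_natl mulrA mulVf ?mul1r //.
by rewrite pnatr_eq0 -lt0n; apply/card_gt0P; exists x0.
Qed.

Lemma avgZl T (c : R) (F : T -> R) : avg (fun x => c * F x) = c * avg F.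
Proof. by rewrite /avg -mulr_sumr mulrCA. Qed.

Lemma avgZr T (c : R) (F : T -> R) : avg (fun x => F x * c) = avg F * c.
Proof. by rewrite /avg -mulr_suml mulrA. Qed.

Lemma avgD T (F G : T -> R) : avg (fun x => F x + G x) = avg F + avg G.
Proof. by rewrite /avg big_split mulrDr. Qed.

Lemma avg_sum T U (P : pred U) (F : U -> T -> R) :
  avg (fun x => \sum_(j | P j) F j x) = \sum_(j | P j) avg (F j).
Proof. by rewrite /avg exchange_big mulr_sumr. Qed.

Lemma exchange_avg T U (F : T -> U -> R) :
  avg (fun x => avg (fun y => F x y)) = avg (fun y => avg (fun x => F x y)).
Proof.
rewrite /avg -!mulr_sumr !mulrA [X in X * _ = _]mulrC.
by congr (_ * _); apply: exchange_big.
Qed.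

Lemma reindex_avg_inj T (h : T -> T) (F : T -> R) :
  injective h -> avg F = avg (fun x => F (h x)).
Proof. by move=> ih; rewrite /avg (reindex_inj ih). Qed.

Lemma avg_addr (V : finZmodType) (w : V) (F : V -> R) :
  avg F = avg (fun x => F (x + w)).
Proof. exact/reindex_avg_inj/addIr. Qed.

Lemma avg_sqr_le T (F : T -> R) : avg F ^+ 2 <= avg (fun x => F x ^+ 2).
Proof.
case: (pickP (@predT T)) => [x0 _ | T0]; last first.
  by rewrite /avg !big_pred0 // !mulr0 expr0n.
set m := avg F.
have var_ge0 : 0 <= avg (fun x => (F x - m) ^+ 2) by apply: avg_ge0 => x; apply: sqr_ge0.
suff var_eq : avg (fun x => (F x - m) ^+ 2) = avg (fun x => F x ^+ 2) - m ^+ 2.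
  by rewrite -subr_ge0 -var_eq.
rewrite (eq_avg (G := fun x => F x ^+ 2 + (F x * (- 2 * m) + m ^+ 2))); last first.
  by move=> x; rewrite sqrrB; ring.
by rewrite !avgD avgZr (avg_cst x0) -/m; ring.
Qed.

Lemma avg_expn2_le T (m : nat) (F : T -> R) :
  avg F ^+ (2 ^ m) <= avg (fun x => F x ^+ (2 ^ m)).
Proof.
elim: m F => [|m IHm] F; first by rewrite !expr1.
rewrite [X in _ <= X](eq_avg (G := fun x => (F x ^+ 2) ^+ (2 ^ m))); last first.
  by move=> x; rewrite expnS exprM.
rewrite expnS exprM; apply: le_trans (IHm _); rewrite lerXn2r ?nnegrE ?sqr_ge0 ?avg_sqr_le //.
by apply: avg_ge0 => x; apply: sqr_ge0.
Qed.

End Average.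

Section GowersAverage.
Variables (R : realFieldType) (V : finZmodType).
Implicit Types (g : V -> R).

Definition mderiv g (h : V) : V -> R := fun s => g s * g (s + h).

Fixpoint gowers_avg (k : nat) g : R :=
  if k is k.+1 then avg (fun h => gowers_avg k (mderiv g h)) else avg g.

Lemma gowers_avg_sqr_le k g : gowers_avg k g ^+ 2 <= gowers_avg k.+1 g.
Proof.
elim: k g => [|k IHk] g.
  suff -> : gowers_avg 1 g = avg g ^+ 2 by [].
  rewrite /= /mderiv exchange_avg expr2 -avgZr; apply: eq_avg => s.
  by rewrite -avgZl [RHS](avg_addr s); apply: eq_avg => h; rewrite addrC.
apply: le_trans (avg_sqr_le _) _; apply: ler_avg => h; exact: IHk.
Qed.

Lemma gowers_avg_ge0 k g : 0 <= gowers_avg k.+1 g.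
Proof. exact: le_trans (sqr_ge0 _) (gowers_avg_sqr_le k g). Qed.

End GowersAverage.

Lemma prod_powerset_setD1 (R : comPzRingType) (T : finType) (A : {set T}) (a : T)
    (F : {set T} -> R) : a \in A ->
  \prod_(S in powerset A) F S = \prod_(S in powerset (A :\ a)) (F S * F (a |: S)).
Proof.
move=> aA; rewrite big_split /= [LHS](bigID (fun S : {set T} => a \in S)) /= mulrC.
congr (_ * _); first by apply: eq_bigl => S; rewrite !powersetE subsetD1.
rewrite (reindex_onto (fun S => a |: S) (fun S => S :\ a)) /=; last first.
  by move=> S /andP[_ aS]; rewrite setD1K.
apply: eq_bigl => S; rewrite !powersetE subsetD1 setU11 subUset sub1set aA andbT.
congr (_ && _); apply/eqP/idP => [<-|aS]; first by rewrite !inE eqxx.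
exact: setU1K.
Qed.

Section Coordinates.
Variables (R : realFieldType) (I : finType) (V : finZmodType).
Implicit Types (x : {ffun I -> V}) (phi : {ffun I -> V} -> R).

Lemma ffun_addE x y i : (x + y) i = x i + y i.
Proof. by rewrite ffunE. Qed.

Definition basis_ffun (a : I) (u : V) : {ffun I -> V} :=
  [ffun i => if i == a then u else 0].

Lemma basis_ffunE a (u : V) i : basis_ffun a u i = if i == a then u else 0.
Proof. by rewrite ffunE. Qed.

Lemma basis_ffunD a (u v : V) : basis_ffun a (u + v) = basis_ffun a u + basis_ffun a v.
Proof. by apply/ffunP => i; rewrite ffun_addE !basis_ffunE; case: eqP; rewrite ?addr0. Qed.

Lemma sum_basis_ffun (B : {set I}) a x (u : V) : a \in B ->
  \sum_(i in B) (x + basis_ffun a u) i = \sum_(i in B) x i + u.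
Proof.
move=> aB; under eq_bigr do rewrite ffun_addE.
rewrite big_split /=; congr (_ + _).
rewrite (bigD1 a) //= basis_ffunE eqxx big1 ?addr0 // => i /andP[_ /negbTE ia].
by rewrite basis_ffunE ia.
Qed.

(* [x + basis_ffun a (h - x a)] is [x] with its coordinate [a] replaced by [h]. *)
Lemma avg_resample a (M : {ffun I -> V} -> R) :
  avg M = avg (fun x => avg (fun h : V => M (x + basis_ffun a (h - x a)))).
Proof.
transitivity (avg (fun u : V => avg (fun x => M (x + basis_ffun a u)))).
  rewrite -[LHS](avg_cst (0 : V)); apply: eq_avg => u.
  exact/reindex_avg_inj/addIr.
by rewrite exchange_avg; apply: eq_avg => x; rewrite (avg_addr (- x a)).
Qed.

Lemma avg_sum_coord (B : {set I}) (g : V -> R) : B != set0 ->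
  avg (fun x => g (\sum_(i in B) x i)) = avg g.
Proof.
case/set0Pn => b bB; rewrite (avg_resample b) -[RHS](avg_cst (0 : {ffun I -> V})); apply: eq_avg => x.
rewrite (avg_addr (\sum_(i in B) x i - x b) g); apply: eq_avg => h.
by rewrite sum_basis_ffun // addrCA addrC.
Qed.

Definition ignores a phi := forall x u, phi (x + basis_ffun a u) = phi x.

Lemma ignoresM a phi psi :
  ignores a phi -> ignores a psi -> ignores a (fun x => phi x * psi x).
Proof. by move=> iphi ipsi x u; rewrite iphi ipsi. Qed.

Lemma ignores_prod (T : finType) (P : pred T) (F : T -> {ffun I -> V} -> R) a :
  (forall s, P s -> ignores a (F s)) -> ignores a (fun x => \prod_(s | P s) F s x).
Proof. by move=> iF x u; apply: eq_bigr => s Ps; apply: iF. Qed.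

Lemma avg_ignores_sqr_le a phi (K : {ffun I -> V} -> R) :
  ignores a phi -> (forall x, `|phi x| <= 1) ->
  avg (fun x => phi x * K x) ^+ 2 <=
    avg (fun u => avg (fun x => K x * K (x + basis_ffun a u))).
Proof.
move=> iphi phi_le1.
pose L x := avg (fun h : V => K (x + basis_ffun a (h - x a))).
have -> : avg (fun x => phi x * K x) = avg (fun x => phi x * L x).
  rewrite (avg_resample a); apply: eq_avg => x.
  by rewrite -avgZl; apply: eq_avg => h; rewrite iphi.
have -> : avg (fun u => avg (fun x => K x * K (x + basis_ffun a u))) =
          avg (fun x => L x ^+ 2).
  under eq_avg => u do rewrite (avg_resample a (fun x => K x * K (x + basis_ffun a u))).
  rewrite exchange_avg; apply: eq_avg => x; rewrite exchange_avg expr2 -avgZr.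
  apply: eq_avg => h; rewrite -avgZl (avg_addr (- h)); apply: eq_avg => u.
  by rewrite -addrA -basis_ffunD [h - x a + _]addrC addrA subrK.
apply: le_trans (avg_sqr_le _) _; apply: ler_avg => x.
by rewrite exprMn ler_piMl ?sqr_ge0 // -real_normK ?num_real // exprn_ile1 ?normr_ge0.
Qed.

Lemma gowers_von_neumann (B A : {set I}) (g : V -> R) (phi : I -> {ffun I -> V} -> R) :
  B != set0 -> A \subset B -> (forall a, a \in A -> ignores a (phi a)) ->
  (forall a x, `|phi a x| <= 1) ->
  avg (fun x => g (\sum_(i in B) x i) * \prod_(a in A) phi a x) ^+ (2 ^ #|A|)
    <= gowers_avg #|A| g.
Proof.
move=> B0; have [k cardA] : exists k, #|A| = k by eexists.
rewrite cardA; elim: k A g phi cardA => [|k IHk] A g phi cardA AB iphi phi_le1.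
  move/eqP: cardA; rewrite cards_eq0 => /eqP ->.
  under eq_avg do rewrite big_set0 mulr1.
  by rewrite avg_sum_coord.
have [a aA] : exists a, a \in A by apply/card_gt0P; rewrite cardA.
pose S (x : {ffun I -> V}) := \sum_(i in B) x i.
pose K (x : {ffun I -> V}) := g (S x) * \prod_(a' in A :\ a) phi a' x.
pose phi' u a' (x : {ffun I -> V}) := phi a' x * phi a' (x + basis_ffun a u).
pose T u := avg (fun x => mderiv g u (S x) * \prod_(a' in A :\ a) phi' u a' x).
have sqr_le : avg (fun x => g (S x) * \prod_(a in A) phi a x) ^+ 2 <= avg T.
  have -> : avg T = avg (fun u => avg (fun x => K x * K (x + basis_ffun a u))).
    apply: eq_avg => u; apply: eq_avg => x.
    rewrite /K /S /mderiv /phi' sum_basis_ffun ?(subsetP AB) // big_split /=; ring.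
  under eq_avg do rewrite (big_setD1 a aA) /= mulrCA.
  exact: (avg_ignores_sqr_le K (iphi a aA) (phi_le1 a)).
rewrite expnS exprM; apply: (@le_trans _ _ (avg T ^+ (2 ^ k))).
  by rewrite lerXn2r ?nnegrE ?sqr_ge0 ?(le_trans (sqr_ge0 _) sqr_le).
apply: le_trans (avg_expn2_le _ _) _; apply: ler_avg => u; apply: IHk.
- by move: cardA; rewrite (cardsD1 a) aA => -[].
- exact: subset_trans (subsetDl _ _) AB.
- move=> a' /setD1P[_ a'A]; apply: ignoresM (iphi a' a'A) _ => x v.
  by rewrite (addrAC x) iphi.
- by move=> a' x; rewrite normrM mulr_ile1 ?normr_ge0.
Qed.

Definition cube_avg (A : {set I}) (g : V -> R) : R :=
  avg (fun s : V => avg (fun y : {ffun I -> V} =>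
    \prod_(S in powerset A) g (s + \sum_(i in S) y i))).

Lemma cube_avg_gowers_avg (A : {set I}) (g : V -> R) : cube_avg A g = gowers_avg #|A| g.
Proof.
have [k cardA] : exists k, #|A| = k by eexists.
rewrite cardA; elim: k A g cardA => [|k IHk] A g cardA.
  move/eqP: cardA; rewrite cards_eq0 => /eqP ->; rewrite /cube_avg powerset0 /=.
  apply: eq_avg => s; rewrite -[RHS](avg_cst (0 : {ffun I -> V})); apply: eq_avg => y.
  by rewrite big_set1 big_set0 addr0.
have [a aA] : exists a, a \in A by apply/card_gt0P; rewrite cardA.
have cardAa : #|A :\ a| = k by move: cardA; rewrite (cardsD1 a) aA => -[].
rewrite /= -(eq_avg (fun h => IHk _ (mderiv g h) cardAa)) /cube_avg [RHS]exchange_avg.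
apply: eq_avg => s; rewrite (avg_resample a) exchange_avg; apply: eq_avg => h.
apply: eq_avg => y; rewrite (prod_powerset_setD1 _ aA); apply: eq_bigr => S.
rewrite powersetE subsetD1 => /andP[_ aS]; rewrite /mderiv big_setU1 //= ffun_addE.
rewrite basis_ffunE eqxx [y a + _]addrC subrK.
have -> : \sum_(i in S) (y + basis_ffun a (h - y a)) i = \sum_(i in S) y i.
  apply: eq_bigr => i iS; rewrite ffun_addE basis_ffunE.
  by case: eqP => [ia|_]; [rewrite -ia iS in aS | rewrite addr0].
by rewrite [h + _]addrC addrA.
Qed.

End Coordinates.

Lemma gowers_innerE (R : realType) (n d : nat) (f : cube n -> R) :
  gowers_inner d f = gowers_avg d f.
Proof.
rewrite -[d in RHS](card_ord d) -cardsT -cube_avg_gowers_avg /gowers_inner /cube_avg.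
rewrite /avg card_ffun card_ord natrX exprS invfM -mulrA mulr_sumr; congr (_ * _).
rewrite -natrX; apply: eq_bigr => x _; congr (_ * _).
rewrite powersetT; apply: eq_bigr => y _; apply: eq_bigl => S; by rewrite in_setT.
Qed.

Section GowersNorm.
Variable R : realType.

Definition gowers_root (V : finZmodType) (k : nat) (g : V -> R) : R :=
  powR (gowers_avg k g) ((2 ^+ k)^-1).

Lemma powR_exp2K (b : R) (m : nat) : 0 <= b -> powR b ((2 ^+ m)^-1) ^+ (2 ^ m) = b.
Proof.
move=> b0; rewrite -powR_mulrn ?powR_ge0 // -powRrM natrX mulVf ?powRr1 //.
by rewrite expf_neq0 // pnatr_eq0.
Qed.

Lemma norm_le_powR_exp2 (T b : R) (m : nat) :
  T ^+ (2 ^ m.+1) <= b -> `|T| <= powR b ((2 ^+ m.+1)^-1).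
Proof.
move=> Tb; have T0 : 0 <= T ^+ (2 ^ m.+1) by rewrite expnS exprM exprn_ge0 ?sqr_ge0.
rewrite -(ler_pXn2r (n := 2 ^ m.+1)) ?expn_gt0 ?nnegrE ?powR_ge0 //.
by rewrite powR_exp2K ?(le_trans T0) // -normrX ger0_norm.
Qed.

Lemma gowers_root_mono (V : finZmodType) (g : V -> R) (k d : nat) :
  (k <= d)%N -> gowers_root k.+1 g <= gowers_root d.+1 g.
Proof.
elim: d => [|d IHd]; first by rewrite leqn0 => /eqP ->.
rewrite leq_eqVlt ltnS => /predU1P[-> //|/IHd le_kd]; apply: le_trans le_kd _.
rewrite /gowers_root -[powR (gowers_avg d.+1 g) _]ger0_norm ?powR_ge0 //.
apply: norm_le_powR_exp2.
by rewrite expnS mulnC exprM powR_exp2K ?gowers_avg_ge0 ?gowers_avg_sqr_le.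
Qed.

End GowersNorm.

Lemma exists_notin_of_card_le (T : finType) (A B : {set T}) :
  (#|B| <= #|A|)%N -> B != A -> exists2 a, a \in A & a \notin B.
Proof.
move=> le_BA neq_BA; have /set0Pn[a /setDP[aA aB]] : A :\: B != set0.
  by rewrite setD_eq0; apply: contra neq_BA => AB; rewrite eq_sym eqEcard AB le_BA.
by exists a.
Qed.

Section EdgeTerms.
Variables (R : realType) (I : finType) (V : finZmodType) (f : V -> R).
Hypothesis f_sign : forall v, f v = 1 \/ f v = -1.

Definition edge_term (e : {set I}) (x : {ffun I -> V}) : R :=
  f 0 ^+ #|e|.+1 * ((\prod_(i in e) f (x i)) * f (\sum_(i in e) x i)).

Lemma sqr_f v : f v ^+ 2 = 1.
Proof. by case: (f_sign v) => ->; rewrite ?sqrrN expr1n. Qed.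

Lemma normr_f v : `|f v| = 1.
Proof. by apply/eqP; rewrite -sqr_norm_eq1 sqr_f. Qed.

Lemma sqr_edge_term e x : edge_term e x ^+ 2 = 1.
Proof.
rewrite /edge_term !exprMn -prodrXl -exprM mulnC exprM !sqr_f !expr1n !mul1r.
by rewrite big1 ?mul1r // => i _; apply: sqr_f.
Qed.

Lemma normr_edge_term e x : `|edge_term e x| = 1.
Proof. by apply/eqP; rewrite -sqr_norm_eq1 sqr_edge_term. Qed.

Lemma edge_term_eq1 e x :
  (edge_term e x == 1) = ((\prod_(i in e) f (x i)) * f (\sum_(i in e) x i) == f 0 ^+ #|e|.+1).
Proof.
have sqr_c : f 0 ^+ #|e|.+1 * f 0 ^+ #|e|.+1 = 1 by rewrite -expr2 -exprM mulnC exprM sqr_f expr1n.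
rewrite /edge_term; apply/eqP/eqP => [cP1|->] //.
by rewrite -[LHS]mul1r -{1}sqr_c -mulrA cP1 mulr1.
Qed.

Lemma ignores_edge_term a (e : {set I}) : a \notin e -> ignores a (edge_term e).
Proof.
move=> ae x u; have xe : forall i, i \in e -> (x + basis_ffun a u) i = x i.
  move=> i ie; rewrite ffun_addE basis_ffunE.
  by case: eqP => [ia|_]; [rewrite -ia ie in ae | rewrite addr0].
by rewrite /edge_term (eq_bigr _ xe) (eq_bigr _ (fun i ie => congr1 f (xe i ie))).
Qed.

Lemma prod_edge_term_factor (J : {set {set I}}) (e0 : {set I}) :
  e0 \in J -> (forall e, e \in J -> #|e| <= #|e0|)%N -> (1 < #|e0|)%N ->
  exists phi : I -> {ffun I -> V} -> R,
    [/\ forall a, a \in e0 -> ignores a (phi a), forall a x, `|phi a x| <= 1 &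
        forall x, \prod_(e in J) edge_term e x =
          f 0 ^+ #|e0|.+1 * (f (\sum_(i in e0) x i) * \prod_(a in e0) phi a x)].
Proof.
move=> e0J e0_max e0_gt1.
have /fin_all_exists[other otherP] : forall i, exists j, i \in e0 -> j \in e0 /\ j != i.
  move=> i; case: (boolP (i \in e0)) => [ie0|]; last by exists i.
  have /card_gt0P[j /setD1P[ji je0]] : (0 < #|e0 :\ i|)%N.
    by move: e0_gt1; rewrite (cardsD1 i) ie0.
  by exists j.
have /fin_all_exists[missed missedP] :
    forall e, exists a, e \in J :\ e0 -> a \in e0 /\ a \notin e.
  have [i0 i0e0] : exists i0, i0 \in e0 by apply/card_gt0P; apply: ltnW.
  move=> e; case: (boolP (e \in J :\ e0)) => [/setD1P[ne eJ]|]; last by exists i0.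
  by have [a ae0 ae] := exists_notin_of_card_le (e0_max e eJ) ne; exists a.
exists (fun a (x : {ffun I -> V}) => (\prod_(i in e0 | other i == a) f (x i)) *
                  \prod_(e in J :\ e0 | missed e == a) edge_term e x); split.
- move=> a _; apply: ignoresM; apply: ignores_prod.
    move=> i /andP[ie0 /eqP <-] x u; rewrite ffun_addE basis_ffunE.
    by case: eqP => [/esym/eqP|_]; rewrite ?addr0 // (negbTE (otherP i ie0).2).
  move=> e /andP[eJ /eqP <-]; exact/ignores_edge_term/(missedP e eJ).2.
- move=> a x; rewrite normrM !normr_prod.
  rewrite big1 => [|i _]; last exact: normr_f.
  by rewrite big1 ?mulr1 // => e _; apply: normr_edge_term.
- move=> x; rewrite (big_setD1 e0 e0J) /= [\prod_(a in e0) _]big_split /=.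
  rewrite -(partition_big other (fun a => a \in e0)) => [|i ie0]; last exact: (otherP i ie0).1.
  rewrite -(partition_big missed (fun a => a \in e0)) => [|e eJ]; last exact: (missedP e eJ).1.
  rewrite /edge_term; ring.
Qed.

Lemma normr_avg_prod_edge_term_le (J : {set {set I}}) (d : nat) :
  J != set0 -> (forall e, e \in J -> 1 < #|e| <= d)%N ->
  `|avg (fun x => \prod_(e in J) edge_term e x)| <= gowers_root d f.
Proof.
case/set0Pn => e1 e1J sizeJ.
have [e0 e0J e0_max] := arg_maxnP (P := fun e => e \in J) (fun e : {set I} => #|e|) e1J.
have /andP[e0_gt1 e0_le_d] := sizeJ e0 e0J.
have [phi [iphi phi_le1 factor]] := prod_edge_term_factor e0J e0_max e0_gt1.
rewrite (eq_avg factor) avgZl normrM normrX normr_f expr1n mul1r.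
have e0_neq0 : e0 != set0 by rewrite -card_gt0 ltnW.
have := gowers_von_neumann f e0_neq0 (subxx e0) iphi phi_le1.
case: #|e0| e0_gt1 e0_le_d => // k _ le_kd /norm_le_powR_exp2 /le_trans; apply.
by case: d {sizeJ} le_kd => // d le_kd; apply: gowers_root_mono.
Qed.

End EdgeTerms.

Lemma prod_1D_powerset (R : comPzRingType) (T : finType) (E : {set T}) (c : T -> R) :
  \prod_(e in E) (1 + c e) = \sum_(J in powerset E) \prod_(e in J) c e.
Proof.
rewrite big_mkcond /= (eq_bigr (fun e => (if e \in E then c e else 0) + 1)); last first.
  by move=> e _; case: (e \in E); [exact: addrC | rewrite add0r].
rewrite bigA_distr [LHS](bigID (fun J => J \in powerset E)) /= [X in _ + X]big1 ?addr0.
  apply: eq_bigr => J; rewrite powersetE => JE; rewrite [RHS]big_mkcond /=.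
  by apply: eq_bigr => e _; case: ifP => // /(subsetP JE) ->.
by move=> J; rewrite powersetE => /subsetPn[e eJ eE]; rewrite (bigD1 e) //= eJ (negbTE eE) mul0r.
Qed.

Lemma powerset_avg_le (R : realFieldType) (T : finType) (E : {set T})
    (a : {set T} -> R) (U : R) :
  0 <= U -> a set0 = 1 -> (forall J, J \in powerset E :\ set0 -> a J <= U) ->
  ((2 ^+ #|E|)%:R)^-1 * \sum_(J in powerset E) a J <= ((2 ^+ #|E|)%:R)^-1 + U.
Proof.
move=> U_ge0 a0 aJ_le.
rewrite (bigD1 set0) ?powersetE ?sub0set //= a0 mulrDr mulr1 lerD2l.
rewrite (eq_bigl (mem (powerset E :\ set0))) => [|J]; last by rewrite !inE andbC.
apply: le_trans (ler_wpM2l _ (ler_sum _ aJ_le)) _; first by rewrite invr_ge0 ler0n.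
rewrite sumr_const -[U *+ _]mulr_natr mulrCA ler_piMr // mulrC.
rewrite ler_pdivrMr ?ltr0n ?expn_gt0 // mul1r ler_nat.
by rewrite -[2 ^+ _]card_powerset subset_leq_card ?subsetDl.
Qed.

Section HypergraphTest.
Variables (R : realType) (n t : nat) (f : cube n -> R).
Hypothesis f_sign : forall v, f v = 1 \/ f v = -1.

Lemma hyper_test_acceptsE (E : {set {set 'I_t}}) (x : {ffun 'I_t -> cube n}) :
  (hyper_test_accepts E f x)%:R = \prod_(e in E) ((1 + edge_term f e x) / 2) :> R.
Proof.
case: (boolP (hyper_test_accepts E f x)) => [/forall_inP acc|/forall_inPn[e eE rej]].
  rewrite big1 // => e eE; move: (acc e eE); rewrite -(edge_term_eq1 f_sign) => /eqP ->.
  by rewrite mulfV // (pnatr_eq0 _ 2).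
rewrite (big_setD1 e eE) /=; move: rej; rewrite -(edge_term_eq1 f_sign) => neq1.
have /eqP := sqr_edge_term f_sign e x; rewrite sqrf_eq1 (negbTE neq1) => /eqP ->.
by rewrite addrN !mul0r.
Qed.

Lemma hyper_test_probE (E : {set {set 'I_t}}) :
  hyper_test_prob E f =
    ((2 ^+ #|E|)%:R)^-1 * \sum_(J in powerset E) avg (fun x => \prod_(e in J) edge_term f e x).
Proof.
have -> : hyper_test_prob E f = avg (fun x => (hyper_test_accepts E f x)%:R).
  rewrite /hyper_test_prob /avg mulrC -sum1_card natr_sum big_mkcond /=.
  by congr (_ * _); apply: eq_bigr => x _; rewrite inE; case: hyper_test_accepts.
under eq_avg do rewrite hyper_test_acceptsE big_split /= prod_1D_powerset prodr_const.
by rewrite avgZr avg_sum mulrC natrX exprVn.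
Qed.

End HypergraphTest.

Theorem theorem2p2 (R : realType) (n t : nat) (E : {set {set 'I_t}})
  (f : 'rV['F_2]_n -> R)
  (hE0 : E != set0)
  (hE : forall e, e \in E -> (2 <= #|e|)%N)
  (hf : forall x, f x = 1 \/ f x = -1) :
  hyper_test_prob E f <=
    ((2 ^+ #|E|)%:R)^-1 + gowers_norm (\max_(e in E) #|e|) f.
Proof.
rewrite (hyper_test_probE hf); apply: powerset_avg_le; first exact: powR_ge0.
  by under eq_avg do rewrite big_set0; apply: (avg_cst (0 : {ffun 'I_t -> cube n})).
move=> J /setD1P[J0]; rewrite powersetE => /subsetP JE.
apply: le_trans (ler_norm _) _; rewrite /gowers_norm gowers_innerE.
apply: normr_avg_prod_edge_term_le => // e /JE eE.
by rewrite hE // leq_bigmax_cond.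
Qed.
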